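(* Consider a floating-base serial chain of $N$ rigid bodies, as described in the context, in the absence of gravity. For $i=2,\ldots,N$ define the inertia-transfer subspace $$\mathcal{T}_i=\Big\{\delta\boldsymbol{\pi}\in\mathbb{R}^{10N}:\ \delta\mathbf{I}_{i-1}=-\big({}^{J_i}\mathbf{X}_{i-1}\big)^{\top}\delta\mathbf{I}_i\,{}^{J_i}\mathbf{X}_{i-1},\ \ \boldsymbol{\Phi}_i^{\top}\delta\mathbf{I}_i=\mathbf{0},\ \ (\boldsymbol{\Phi}_i\times)^{\top}\delta\mathbf{I}_i+\delta\mathbf{I}_i(\boldsymbol{\Phi}_i\times)=\mathbf{0},\ \ \delta\mathbf{I}_j=\mathbf{0}\text{ for } j\notin\{i,i-1\}\Big\},$$ where $\delta\mathbf{I}_j=[\delta\boldsymbol{\pi}_j]^{\wedge}$. Then the parameter nullspace satisfies $$\mathcal{N}=\bigoplus_{i=2}^{N}\mathcal{T}_i,$$ the direct sum of vector subspaces.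
   Context: Spatial notation. For $\mathbf{x}\in\mathbb{R}^3$, $\mathbf{S}(\mathbf{x})$ is the skew-symmetric matrix with $\mathbf{S}(\mathbf{x})\mathbf{y}=\mathbf{x}\times\mathbf{y}$. For a spatial vector $\mathbf{v}=[\boldsymbol{\omega};\mathbf{u}]\in\mathbb{R}^6$ ($\boldsymbol\omega,\mathbf u\in\mathbb R^3$), the spatial cross-product matrix is $(\mathbf{v}\times)=\begin{bmatrix}\mathbf{S}(\boldsymbol{\omega})&\mathbf{0}\\ \mathbf{S}(\mathbf{u})&\mathbf{S}(\boldsymbol{\omega})\end{bmatrix}\in\mathbb{R}^{6\times6}$. A spatial transform is a matrix $\begin{bmatrix}\mathbf{R}&\mathbf{0}\\-\mathbf{R}\mathbf{S}(\mathbf{p})&\mathbf{R}\end{bmatrix}$ with $\mathbf{R}\in SO(3)$, $\mathbf{p}\in\mathbb{R}^3$. The inertial parameters of a body are $\boldsymbol{\pi}=[m,h_x,h_y,h_z,I_{xx},I_{xy},I_{xz},I_{yy},I_{yz},I_{zz}]^\top\in\mathbb{R}^{10}$, and the (linear) map $[\cdot]^{\wedge}$ sends $\boldsymbol\pi$ to the spatial inertia $[\boldsymbol{\pi}]^{\wedge}=\begin{bmatrix}\bar{\mathbf{I}}&\mathbf{S}(\mathbf{h})\\ \mathbf{S}(\mathbf{h})^{\top}&m\mathbf{1}_3\end{bmatrix}$ with $\mathbf{h}=[h_x,h_y,h_z]^\top$ and $\bar{\mathbf{I}}$ the symmetric $3\times3$ matrix with entries $I_{xx},I_{xy},\ldots$;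 $[\cdot]^{\vee}$ is its inverse on the 10-dimensional space of such matrices. Floating-base chain. Bodies are numbered $1,\ldots,N$; body 1 (the floating base) has spatial velocity $\mathbf{v}_1\in\mathbb{R}^6$ that may take any value. For $i=2,\ldots,N$, joint $i$ is a single-DoF joint with coordinate $q_i\in\mathbb{R}$ connecting body $i-1$ to body $i$, with $\mathbf{v}_i={}^{i}\mathbf{X}_{i-1}(q_i)\mathbf{v}_{i-1}+\boldsymbol{\Phi}_i\dot q_i$, where $\boldsymbol{\Phi}_i\in\mathbb{R}^6$ is a fixed joint free-mode vector, ${}^{i}\mathbf{X}_{i-1}(q_i)={}^{i}\mathbf{X}_{J_i}(q_i)\,{}^{J_i}\mathbf{X}_{i-1}$, ${}^{J_i}\mathbf{X}_{i-1}$ is a constant spatial transform, and ${}^{i}\mathbf{X}_{J_i}(q_i)$ is a spatial transform with ${}^{i}\mathbf{X}_{J_i}(0)=\mathbf{1}_6$ and $\frac{d}{dq_i}{}^{i}\mathbf{X}_{J_i}(q_i)=-(\boldsymbol{\Phi}_i\times)\,{}^{i}\mathbf{X}_{J_i}(q_i)$. The full parameter vector is $\boldsymbol{\pi}=[\boldsymbol{\pi}_1^\top,\ldots,\boldsymbol{\pi}_N^\top]^\top\in\mathbb{R}^{10N}$, and the kinetic energy is $T=\frac12\sum_{j}\mathbf{v}_j^\top[\boldsymbol{\pi}_j]^{\wedge}\mathbf{v}_j$. The parameter nullspace $\mathcal{N}$ is the set of $\delta\boldsymbol{\pi}\in\mathbb{R}^{10N}$ such that $\sum_{j=1}^N\mathbf{v}_j^\top[\delta\boldsymbol{\pi}_j]^{\wedge}\mathbf{v}_j=0$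 for all $\mathbf{v}_1\in\mathbb{R}^6$ and all $q_i,\dot q_i$ ($i\ge2$); equivalently, the set of parameter changes leaving the mass matrix (and hence the gravity-free inverse dynamics, i.e. the regressor output $\mathbf Y(\mathbf q,\dot{\mathbf q},\ddot{\mathbf q})\delta\boldsymbol\pi$) unchanged for all states. *)

(* Vectors and matrices are represented as functions on nat; only the
   entries with indices below the stated dimension are meaningful. *)
From Stdlib Require Import Reals.
Open Scope R_scope.

Fixpoint sumR (n : nat) (f : nat -> R) : R :=
  match n with
  | O => 0
  | S n' => sumR n' f + f n'
  end.

Definition vec := nat -> R.
Definition mat := nat -> nat -> R.

Definition mmul (n : nat) (A B : mat) : mat :=
  fun i j => sumR n (fun k => A i k * B k j).
Definition mvmul (n : nat) (A : mat) (x : vec) : vec :=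
  fun i => sumR n (fun k => A i k * x k).
Definition mtr (A : mat) : mat := fun i j => A j i.
Definition madd (A B : mat) : mat := fun i j => A i j + B i j.
Definition mopp (A : mat) : mat := fun i j => - A i j.
Definition mscal (c : R) (A : mat) : mat := fun i j => c * A i j.
Definition mzero : mat := fun _ _ => 0.
Definition ident : mat := fun i j => if Nat.eqb i j then 1 else 0.
Definition dot (n : nat) (x y : vec) : R := sumR n (fun k => x k * y k).

Definition meq (n m : nat) (A B : mat) : Prop :=
  forall i j, (i < n)%nat -> (j < m)%nat -> A i j = B i j.

Definition block (A B C D : mat) : mat :=
  fun i j =>
    if Nat.ltb i 3 then
      (if Nat.ltb j 3 then A i j else if Nat.ltb j 6 then B i (j - 3)%nat else 0)
    else if Nat.ltb i 6 then
      (if Nat.ltb j 3 then C (i - 3)%nat j else if Nat.ltb j 6 then D (i - 3)%nat (j - 3)%nat else 0)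
    else 0.

Definition skew (x : vec) : mat :=
  fun i j =>
    match i, j with
    | O, 1%nat => - x 2%nat | O, 2%nat => x 1%nat
    | 1%nat, O => x 2%nat   | 1%nat, 2%nat => - x 0%nat
    | 2%nat, O => - x 1%nat | 2%nat, 1%nat => x 0%nat
    | _, _ => 0%R
    end.

(* spatial vector v = [omega; u]: omega = v 0..2, u = v 3..5 *)
Definition ang (v : vec) : vec := fun k => v k.
Definition lin (v : vec) : vec := fun k => v (k + 3)%nat.

Definition scross (v : vec) : mat :=
  block (skew (ang v)) mzero (skew (lin v)) (skew (ang v)).

Definition det3 (A : mat) : R :=
  A 0%nat 0%nat * (A 1%nat 1%nat * A 2%nat 2%nat - A 1%nat 2%nat * A 2%nat 1%nat)
  - A 0%nat 1%nat * (A 1%nat 0%nat * A 2%nat 2%nat - A 1%nat 2%nat * A 2%nat 0%nat)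
  + A 0%nat 2%nat * (A 1%nat 0%nat * A 2%nat 1%nat - A 1%nat 1%nat * A 2%nat 0%nat).

Definition is_rotation (Rm : mat) : Prop :=
  meq 3 3 (mmul 3 (mtr Rm) Rm) ident /\ det3 Rm = 1.

Definition is_spatial_transform (X : mat) : Prop :=
  exists (Rm : mat) (p : vec),
    is_rotation Rm /\
    meq 6 6 X (block Rm mzero (mopp (mmul 3 Rm (skew p))) Rm).

(* inertial parameters pi = [m,hx,hy,hz,Ixx,Ixy,Ixz,Iyy,Iyz,Izz] (indices 0..9) *)
Definition Ibar (p : vec) : mat :=
  fun i j =>
    match i, j with
    | 0, 0 => p 4%nat | 0, 1 => p 5%nat | 0, 2 => p 6%nat
    | 1, 0 => p 5%nat | 1, 1 => p 7%nat | 1, 2 => p 8%nat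
    | 2, 0 => p 6%nat | 2, 1 => p 8%nat | 2, 2 => p 9%nat
    | _, _ => 0%R
    end.
Definition hvec (p : vec) : vec := fun k => p (S k).

Definition hat (p : vec) : mat :=
  block (Ibar p) (skew (hvec p)) (mtr (skew (hvec p))) (mscal (p 0%nat) ident).

Definition quad6 (v : vec) (M : mat) : R := dot 6 v (mvmul 6 M v).

(* Xc i = ^{J_i}X_{i-1} (constant), XJ i q = ^{i}X_{J_i}(q), Phi i = Phi_i *)
Definition Xlink (XJc : nat -> mat) (XJ : nat -> R -> mat) (i : nat) (q : R) : mat :=
  mmul 6 (XJ i q) (XJc i).

Fixpoint vel (Phi : nat -> vec) (XJc : nat -> mat) (XJ : nat -> R -> mat)
    (v1 : vec) (q qd : nat -> R) (n : nat) : vec :=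
  match n with
  | O => v1
  | S n' =>
      match n' with
      | O => v1
      | S _ => fun k =>
          mvmul 6 (Xlink XJc XJ (S n') (q (S n'))) (vel Phi XJc XJ v1 q qd n') k
          + qd (S n') * Phi (S n') k
      end
  end.

(* A parameter vector of R^{10N}: dp j is the 10-vector of body j (1 <= j <= N);
   entries outside this range are required to be zero. *)
Definition param := nat -> vec.
Definition is_param (N : nat) (dp : param) : Prop :=
  forall j k, (j = 0 \/ N < j \/ 10 <= k)%nat -> dp j k = 0.

Definition nullspace (N : nat) (Phi : nat -> vec) (XJc : nat -> mat)
    (XJ : nat -> R -> mat) (dp : param) : Prop :=
  is_param N dp /\
  forall (v1 : vec) (q qd : nat -> R),
    sumR N (fun j => quad6 (vel Phi XJc XJ v1 q qd (S j)) (hat (dp (S j)))) = 0.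

Definition inertia_transfer (N : nat) (Phi : nat -> vec) (XJc : nat -> mat)
    (i : nat) (dp : param) : Prop :=
  is_param N dp /\
  meq 6 6 (hat (dp (i - 1)%nat))
          (mopp (mmul 6 (mmul 6 (mtr (XJc i)) (hat (dp i))) (XJc i))) /\
  (forall b, (b < 6)%nat -> sumR 6 (fun a => Phi i a * hat (dp i) a b) = 0) /\
  meq 6 6 (madd (mmul 6 (mtr (scross (Phi i))) (hat (dp i)))
                (mmul 6 (hat (dp i)) (scross (Phi i)))) mzero /\
  (forall j, j <> i -> j <> (i - 1)%nat -> meq 6 6 (hat (dp j)) mzero).

Definition is_direct_sum (N : nat) (Sp : param -> Prop) (T : nat -> param -> Prop) : Prop :=
  (forall dp, is_param N dp ->
     (Sp dp <->
      exists t : nat -> param,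
        (forall i, (2 <= i <= N)%nat -> T i (t i)) /\
        (forall j k, dp j k = sumR (N - 1) (fun m => t (m + 2)%nat j k)))) /\
  (forall t : nat -> param,
     (forall i, (2 <= i <= N)%nat -> T i (t i)) ->
     (forall j k, sumR (N - 1) (fun m => t (m + 2)%nat j k) = 0) ->
     forall i, (2 <= i <= N)%nat -> forall j k, t i j k = 0).

(* T_i lies in the nullspace: a joint transform with X' = -(Phi x) X preserves the form
   v^T dI_i v exactly when (Phi x)^T dI_i + dI_i (Phi x) = 0, the joint-rate terms drop out
   because Phi^T dI_i = 0, and what remains of body i is minus the form of body i-1 after the
   constant transform ^{J_i}X_{i-1}.  Conversely, let dpi be in the nullspace with bodies
   beyond k unloaded.  Moving only joint k and using that every velocity of body k-1 is
   reachable at rest, the form of body k must be independent of q_k and qdot_k, which forces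
   the two conditions on dI_k; transferring dI_k to body k-1 produces an element of T_k whose
   removal unloads body k.  At k = 1 the form of the free base vanishes for all v_1, so dI_1 = 0.
   The sum is direct because, once the components beyond i vanish, only the T_i component
   loads body i. *)

From Stdlib Require Import Reals Lra Lia FunctionalExtensionality.
Open Scope R_scope.

(** * Finite sums, vectors and matrices *)

Lemma sumR_ext n f g : (forall k, (k < n)%nat -> f k = g k) -> sumR n f = sumR n g.
Proof. induction n; simpl; intros H; auto. rewrite IHn, H by (auto; intros; apply H; lia). ring. Qed.

Lemma sumR_add n f g : sumR n (fun k => f k + g k) = sumR n f + sumR n g.
Proof. induction n; simpl; [ring|]. rewrite IHn; ring. Qed.

Lemma sumR_scal n c f : sumR n (fun k => c * f k) = c * sumR n f.
Proof. induction n; simpl; [ring|]. rewrite IHn; ring. Qed.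

Lemma sumR_opp n f : sumR n (fun k => - f k) = - sumR n f.
Proof. induction n; simpl; [ring|]. rewrite IHn; ring. Qed.

Lemma sumR_eq0 n f : (forall k, (k < n)%nat -> f k = 0) -> sumR n f = 0.
Proof. induction n; simpl; intros H; [ring|]. rewrite IHn, H by (auto; intros; apply H; lia). ring. Qed.

Lemma sumR_exchange n m F :
  sumR n (fun i => sumR m (fun j => F i j)) = sumR m (fun j => sumR n (fun i => F i j)).
Proof.
  induction n; simpl.
  - symmetry; apply sumR_eq0; auto.
  - rewrite IHn, <- sumR_add. reflexivity.
Qed.

Lemma sumR_delta n c x : (c < n)%nat -> sumR n (fun m => if Nat.eqb m c then x else 0) = x.
Proof.
  intros Hc. induction n; [lia|]. simpl.
  destruct (Nat.eqb_spec n c) as [->|Hnc].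
  - rewrite sumR_eq0; [ring|]. intros k Hk. destruct (Nat.eqb_spec k c); [lia|auto].
  - rewrite IHn by lia. ring.
Qed.

Lemma sumR_sub_single n f g c : (c < n)%nat ->
  (forall k, (k < n)%nat -> k <> c -> f k = g k) -> sumR n f - sumR n g = f c - g c.
Proof.
  intros Hc H. unfold Rminus at 1. rewrite <- sumR_opp, <- sumR_add.
  rewrite <- (sumR_delta n c (f c - g c)) by auto. apply sumR_ext. intros k Hk.
  destruct (Nat.eqb_spec k c) as [->|Hkc]; [ring|]. rewrite H by auto. ring.
Qed.

Lemma sumR_two n f c1 c2 : (c1 < n)%nat -> (c2 < n)%nat -> c1 <> c2 ->
  (forall k, (k < n)%nat -> k <> c1 -> k <> c2 -> f k = 0) -> sumR n f = f c1 + f c2.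
Proof.
  intros H1 H2 H12 H.
  rewrite (sumR_ext n f (fun k => (if Nat.eqb k c1 then f c1 else 0)
                                 + (if Nat.eqb k c2 then f c2 else 0))).
  - rewrite sumR_add, !sumR_delta; auto.
  - intros k Hk. destruct (Nat.eqb_spec k c1), (Nat.eqb_spec k c2); subst; try lia; try ring.
    rewrite H; auto; ring.
Qed.

Definition basis_vec (i : nat) : vec := fun k => if Nat.eqb k i then 1 else 0.

Lemma sumR_basis_l n i f : (i < n)%nat -> sumR n (fun k => basis_vec i k * f k) = f i.
Proof.
  intros Hi. rewrite <- (sumR_delta n i (f i)) by auto. apply sumR_ext. intros k _.
  unfold basis_vec. destruct (Nat.eqb_spec k i); subst; ring.
Qed.

Lemma sumR_basis_r n i f : (i < n)%nat -> sumR n (fun k => f k * basis_vec i k) = f i.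
Proof. intros Hi. rewrite <- (sumR_basis_l n i f Hi). apply sumR_ext; intros; ring. Qed.

Lemma mvmul_ext n A x y i : (forall k, (k < n)%nat -> x k = y k) -> mvmul n A x i = mvmul n A y i.
Proof. intros H; unfold mvmul; apply sumR_ext; intros; rewrite H; auto. Qed.

Lemma mvmul_ext_mat n A B x i : (forall k, (k < n)%nat -> A i k = B i k) ->
  mvmul n A x i = mvmul n B x i.
Proof. intros H; unfold mvmul; apply sumR_ext; intros; rewrite H; auto. Qed.

Lemma dot_ext n x x' y y' : (forall k, (k < n)%nat -> x k = x' k) ->
  (forall k, (k < n)%nat -> y k = y' k) -> dot n x y = dot n x' y'.
Proof. intros H1 H2; unfold dot; apply sumR_ext; intros; rewrite H1, H2; auto. Qed.

Lemma mvmul_mmul n A B x i : mvmul n (mmul n A B) x i = mvmul n A (mvmul n B x) i.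
Proof.
  unfold mvmul, mmul.
  rewrite (sumR_ext n _ (fun k => sumR n (fun l => A i l * B l k * x k))).
  2:{ intros. rewrite Rmult_comm, <- sumR_scal. apply sumR_ext; intros; ring. }
  rewrite sumR_exchange. apply sumR_ext; intros. rewrite <- sumR_scal. apply sumR_ext; intros; ring.
Qed.

Lemma dot_mvmul_mtr n x A y : dot n x (mvmul n (mtr A) y) = dot n (mvmul n A x) y.
Proof.
  unfold dot, mvmul, mtr.
  rewrite (sumR_ext n _ (fun k => sumR n (fun l => x k * A l k * y l))).
  2:{ intros. rewrite <- sumR_scal. apply sumR_ext; intros; ring. }
  rewrite sumR_exchange. apply sumR_ext; intros.
  rewrite Rmult_comm, <- sumR_scal. apply sumR_ext; intros; ring.
Qed.

Lemma dot_mvmul_sym n x y M : (forall i j, (i < n)%nat -> (j < n)%nat -> M i j = M j i) ->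
  dot n x (mvmul n M y) = dot n y (mvmul n M x).
Proof.
  intros HM. rewrite (dot_ext n y y (mvmul n M x) (mvmul n (mtr M) x)); auto.
  2:{ intros; apply mvmul_ext_mat; intros; unfold mtr; apply HM; auto. }
  rewrite dot_mvmul_mtr. unfold dot. apply sumR_ext; intros; ring.
Qed.

Lemma dot_basis n M i j : (i < n)%nat -> (j < n)%nat ->
  dot n (basis_vec i) (mvmul n M (basis_vec j)) = M i j.
Proof. intros Hi Hj. unfold dot. rewrite sumR_basis_l by auto. apply sumR_basis_r; auto. Qed.

Lemma mvmul_lincomb n A x y t i :
  mvmul n A (fun k => x k + t * y k) i = mvmul n A x i + t * mvmul n A y i.
Proof. unfold mvmul. rewrite <- sumR_scal, <- sumR_add. apply sumR_ext; intros; ring. Qed.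

Lemma mvmul_lincomb_mat n A B a b x i :
  mvmul n (fun k l => a * A k l + b * B k l) x i = a * mvmul n A x i + b * mvmul n B x i.
Proof. unfold mvmul. rewrite <- !sumR_scal, <- sumR_add. apply sumR_ext; intros; ring. Qed.

Lemma dot_lincomb_l n x y t z : dot n (fun k => x k + t * y k) z = dot n x z + t * dot n y z.
Proof. unfold dot. rewrite <- sumR_scal, <- sumR_add. apply sumR_ext; intros; ring. Qed.

Lemma dot_lincomb_r n x y t z : dot n z (fun k => x k + t * y k) = dot n z x + t * dot n z y.
Proof. unfold dot. rewrite <- sumR_scal, <- sumR_add. apply sumR_ext; intros; ring. Qed.

Lemma dot_opp_l n x y : dot n (fun k => - x k) y = - dot n x y.
Proof. unfold dot. rewrite <- sumR_opp. apply sumR_ext; intros; ring. Qed.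

Lemma dot_opp_r n x y : dot n x (fun k => - y k) = - dot n x y.
Proof. unfold dot. rewrite <- sumR_opp. apply sumR_ext; intros; ring. Qed.

Lemma mvmul_mopp n A x i : mvmul n (mopp A) x i = - mvmul n A x i.
Proof. unfold mvmul, mopp. rewrite <- sumR_opp. apply sumR_ext; intros; ring. Qed.

Lemma mvmul_opp_vec n A x i : mvmul n A (fun k => - x k) i = - mvmul n A x i.
Proof. unfold mvmul. rewrite <- sumR_opp. apply sumR_ext; intros; ring. Qed.

Lemma mvmul_madd n A B x i : mvmul n (madd A B) x i = mvmul n A x i + mvmul n B x i.
Proof. unfold mvmul, madd. rewrite <- sumR_add. apply sumR_ext; intros; ring. Qed.

Lemma mvmul_ident n A x k : meq n n A ident -> (k < n)%nat -> mvmul n A x k = x k.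
Proof.
  intros HA Hk. rewrite (mvmul_ext_mat n A ident) by (intros; apply HA; auto).
  unfold mvmul. rewrite <- (sumR_basis_l n k x Hk). apply sumR_ext. intros j _.
  unfold ident, basis_vec. rewrite Nat.eqb_sym. reflexivity.
Qed.

Lemma mmul_meq n A A' B B' : meq n n A A' -> meq n n B B' -> meq n n (mmul n A B) (mmul n A' B').
Proof. intros H1 H2 i j Hi Hj. unfold mmul. apply sumR_ext; intros. rewrite H1, H2; auto. Qed.

Lemma mtr_meq n A A' : meq n n A A' -> meq n n (mtr A) (mtr A').
Proof. intros H i j Hi Hj. apply H; auto. Qed.

Lemma mmul_eq0_r n A B i j : (forall a b, B a b = 0) -> mmul n A B i j = 0.
Proof. intros H. apply sumR_eq0. intros; rewrite H; ring. Qed.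

Lemma mmul_eq0_l n A B i j : (forall a b, A a b = 0) -> mmul n A B i j = 0.
Proof. intros H. apply sumR_eq0. intros; rewrite H; ring. Qed.

Lemma congr_eq0 n X M i j : (forall a b, M a b = 0) -> mmul n (mmul n (mtr X) M) X i j = 0.
Proof. intros H. apply mmul_eq0_l. intros; apply mmul_eq0_r; auto. Qed.

Lemma quad6_ext v v' M : (forall k, (k < 6)%nat -> v k = v' k) -> quad6 v M = quad6 v' M.
Proof. intros H. unfold quad6. apply dot_ext; auto. intros. apply mvmul_ext; auto. Qed.

Lemma quad6_ext_mat v M M' : meq 6 6 M M' -> quad6 v M = quad6 v M'.
Proof. intros H. unfold quad6. apply dot_ext; auto. intros. apply mvmul_ext_mat; auto. Qed.

Lemma quad6_expand v y t M : quad6 (fun k => v k + t * y k) M =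
  quad6 v M + t * (dot 6 v (mvmul 6 M y) + dot 6 y (mvmul 6 M v)) + t * t * quad6 y M.
Proof.
  unfold quad6. rewrite dot_lincomb_l.
  rewrite !(dot_ext 6 _ _ (mvmul 6 M (fun k => v k + t * y k))
                         (fun k => mvmul 6 M v k + t * mvmul 6 M y k))
    by (auto; intros; apply mvmul_lincomb).
  rewrite !dot_lincomb_r. ring.
Qed.

Lemma quad6_lincomb_mat v A B a b :
  quad6 v (fun k l => a * A k l + b * B k l) = a * quad6 v A + b * quad6 v B.
Proof.
  unfold quad6, dot. rewrite <- !sumR_scal, <- sumR_add. apply sumR_ext. intros k _.
  rewrite mvmul_lincomb_mat. ring.
Qed.

Lemma quad6_mzero v M : meq 6 6 M mzero -> quad6 v M = 0.
Proof.
  intros H. rewrite (quad6_ext_mat v M mzero H). unfold quad6, dot, mvmul, mzero.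
  apply sumR_eq0; intros. rewrite sumR_eq0; [ring|]. intros; ring.
Qed.

Lemma quad6_polarization M : (forall i j, (i < 6)%nat -> (j < 6)%nat -> M i j = M j i) ->
  (forall v, quad6 v M = 0) -> meq 6 6 M mzero.
Proof.
  intros HS HQ i j Hi Hj. unfold mzero.
  pose proof (HQ (basis_vec i)) as Qi. pose proof (HQ (basis_vec j)) as Qj.
  pose proof (HQ (fun k => basis_vec i k + 1 * basis_vec j k)) as Qij.
  rewrite quad6_expand in Qij. unfold quad6 in Qi, Qj, Qij.
  rewrite !dot_basis, (HS j i) in * by auto. lra.
Qed.

Lemma quad6_mopp v M : quad6 v (mopp M) = - quad6 v M.
Proof.
  unfold quad6. rewrite <- dot_opp_r. apply dot_ext; auto. intros; apply mvmul_mopp.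
Qed.

Lemma quad6_congr v X M : quad6 v (mmul 6 (mmul 6 (mtr X) M) X) = quad6 (mvmul 6 X v) M.
Proof.
  unfold quad6. rewrite <- dot_mvmul_mtr. apply dot_ext; auto. intros; rewrite !mvmul_mmul; reflexivity.
Qed.

(** * Spatial inertias *)

Ltac case6 i := destruct i as [|[|[|[|[|[|i]]]]]].
Ltac unfold_spatial :=
  unfold hat, block, Ibar, skew, hvec, mscal, ident, mtr, mzero, mopp, madd, scross, ang, lin in *;
  cbn in *.

Lemma hat_sym p i j : hat p i j = hat p j i.
Proof. case6 i; case6 j; unfold_spatial; ring. Qed.

Lemma hat_lincomb a b x y i j : hat (fun k => a * x k + b * y k) i j = a * hat x i j + b * hat y i j.
Proof. case6 i; case6 j; unfold_spatial; ring. Qed.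

Lemma hat_eq0 p i j : (forall k, (k < 10)%nat -> p k = 0) -> hat p i j = 0.
Proof. intros H. case6 i; case6 j; unfold_spatial; rewrite ?H by lia; ring. Qed.

Lemma hat_eq0_meq (p : vec) : (forall c, p c = 0) -> meq 6 6 (hat p) mzero.
Proof. intros H i j _ _. apply hat_eq0. auto. Qed.

Lemma hat_eq0_inv p : meq 6 6 (hat p) mzero -> forall k, (k < 10)%nat -> p k = 0.
Proof.
  intros H k Hk.
  destruct k as [|[|[|[|[|[|[|[|[|[|k]]]]]]]]]]; try lia.
  - specialize (H 3%nat 3%nat ltac:(lia) ltac:(lia)); unfold_spatial; lra.
  - specialize (H 1%nat 5%nat ltac:(lia) ltac:(lia)); unfold_spatial; lra.
  - specialize (H 0%nat 5%nat ltac:(lia) ltac:(lia)); unfold_spatial; lra.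
  - specialize (H 0%nat 4%nat ltac:(lia) ltac:(lia)); unfold_spatial; lra.
  - specialize (H 0%nat 0%nat ltac:(lia) ltac:(lia)); unfold_spatial; lra.
  - specialize (H 0%nat 1%nat ltac:(lia) ltac:(lia)); unfold_spatial; lra.
  - specialize (H 0%nat 2%nat ltac:(lia) ltac:(lia)); unfold_spatial; lra.
  - specialize (H 1%nat 1%nat ltac:(lia) ltac:(lia)); unfold_spatial; lra.
  - specialize (H 1%nat 2%nat ltac:(lia) ltac:(lia)); unfold_spatial; lra.
  - specialize (H 2%nat 2%nat ltac:(lia) ltac:(lia)); unfold_spatial; lra.
Qed.

Definition hat_shaped (M : mat) : Prop :=
  (forall i j, (i < 6)%nat -> (j < 6)%nat -> M i j = M j i) /\
  (forall a b, (a < 3)%nat -> (b < 3)%nat -> M (3 + a)%nat (3 + b)%nat = M 3%nat 3%nat * ident a b) /\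
  (forall a b, (a < 3)%nat -> (b < 3)%nat -> M a (3 + b)%nat = - M b (3 + a)%nat).

Definition vee (M : mat) : vec := fun k =>
  match k with
  | 0 => M 3%nat 3%nat | 1 => - M 1%nat 5%nat | 2 => M 0%nat 5%nat | 3 => - M 0%nat 4%nat
  | 4 => M 0%nat 0%nat | 5 => M 0%nat 1%nat | 6 => M 0%nat 2%nat | 7 => M 1%nat 1%nat
  | 8 => M 1%nat 2%nat | 9 => M 2%nat 2%nat | _ => 0 end.

Lemma vee_high M k : (10 <= k)%nat -> vee M k = 0.
Proof. intros H. do 10 (destruct k as [|k]; [lia|]). reflexivity. Qed.

Lemma hat_vee M : hat_shaped M -> meq 6 6 (hat (vee M)) M.
Proof.
  intros [HS [HD HO]].
  pose proof (HD 1 1)%nat; pose proof (HD 2 2)%nat; pose proof (HD 0 1)%nat;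
  pose proof (HD 0 2)%nat; pose proof (HD 1 2)%nat;
  pose proof (HO 0 0)%nat; pose proof (HO 1 1)%nat; pose proof (HO 2 2)%nat;
  pose proof (HO 1 0)%nat; pose proof (HO 2 0)%nat; pose proof (HO 2 1)%nat.
  repeat match goal with H : (_ < 3)%nat -> _ |- _ => specialize (H ltac:(lia)) end.
  intros i j Hi Hj. case6 i; try lia; case6 j; try lia; unfold_spatial; try lra.
  all: match goal with |- _ = ?F ?a ?b => rewrite (HS a b) by lia; lra end.
Qed.

Lemma skew_antisym x c d : skew x c d = - skew x d c.
Proof. destruct c as [|[|[|c]]]; destruct d as [|[|[|d]]]; cbn; ring. Qed.

Lemma congr_sym n X M : (forall i j, (i < n)%nat -> (j < n)%nat -> M i j = M j i) ->
  forall i j, mmul n (mmul n (mtr X) M) X i j = mmul n (mmul n (mtr X) M) X j i.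
Proof.
  intros HS i j. unfold mmul, mtr.
  rewrite !(sumR_ext n (fun k => sumR n (fun l => X l _ * M l k) * X k _)
                     (fun k => sumR n (fun l => X l _ * M l k * X k _)))
    by (intros; rewrite Rmult_comm, <- sumR_scal; apply sumR_ext; intros; ring).
  rewrite sumR_exchange. apply sumR_ext; intros. apply sumR_ext; intros. rewrite HS by auto. ring.
Qed.

Lemma congr_antisym n (Rm A : mat) (a b : nat) :
  (forall c d, (c < n)%nat -> (d < n)%nat -> A c d = - A d c) ->
  sumR n (fun c => sumR n (fun d => Rm c a * A c d * Rm d b)) =
  - sumR n (fun c => sumR n (fun d => Rm c b * A c d * Rm d a)).
Proof.
  intros HA. rewrite sumR_exchange, <- sumR_opp. apply sumR_ext. intros c Hc.
  rewrite <- sumR_opp. apply sumR_ext. intros d Hd. rewrite HA by auto. ring.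
Qed.

Definition spatial_xform (Rm : mat) (p : vec) : mat :=
  block Rm mzero (mopp (mmul 3 Rm (skew p))) Rm.

Section Congruence.
Variables (Rm : mat) (p pi : vec).
Let K := mmul 6 (mmul 6 (mtr (spatial_xform Rm p)) (hat pi)) (spatial_xform Rm p).

Ltac unfold_xform :=
  unfold K, spatial_xform, mmul, hat, block, Ibar, skew, hvec, mscal, ident, mtr, mzero, mopp; cbn.

Lemma congr_lower_right a b : (a < 3)%nat -> (b < 3)%nat ->
  K (3 + a)%nat (3 + b)%nat = pi 0%nat * mmul 3 (mtr Rm) Rm a b.
Proof.
  intros Ha Hb. destruct a as [|[|[|a]]]; try lia; destruct b as [|[|[|b]]]; try lia; unfold_xform; ring.
Qed.

Lemma congr_upper_right a b : (a < 3)%nat -> (b < 3)%nat ->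
  K a (3 + b)%nat = sumR 3 (fun c => sumR 3 (fun d => Rm c a * skew (hvec pi) c d * Rm d b))
     + pi 0%nat * sumR 3 (fun c => skew p a c * mmul 3 (mtr Rm) Rm c b).
Proof.
  intros Ha Hb. destruct a as [|[|[|a]]]; try lia; destruct b as [|[|[|b]]]; try lia; unfold_xform; ring.
Qed.

Lemma hat_shaped_congr_xform : meq 3 3 (mmul 3 (mtr Rm) Rm) ident -> hat_shaped K.
Proof.
  intros HO. split; [|split].
  - intros. apply congr_sym. intros; apply hat_sym.
  - intros a b Ha Hb. change (K 3%nat 3%nat) with (K (3 + 0)%nat (3 + 0)%nat).
    rewrite !congr_lower_right, !HO by lia. unfold ident at 2; cbn; ring.
  - intros a b Ha Hb. rewrite !congr_upper_right by auto.
    assert (Hp : forall a b, (a < 3)%nat -> (b < 3)%nat ->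
      sumR 3 (fun c => skew p a c * mmul 3 (mtr Rm) Rm c b) = skew p a b).
    { intros a' b' Ha' Hb'. rewrite (sumR_ext 3 _ (fun c => skew p a' c * basis_vec b' c)).
      - apply sumR_basis_r; auto.
      - intros c Hc. rewrite HO by auto. unfold ident, basis_vec. rewrite Nat.eqb_sym. reflexivity. }
    rewrite !Hp, (skew_antisym p a b) by auto.
    rewrite (congr_antisym 3 Rm (skew (hvec pi)) a b) by (intros; apply skew_antisym). ring.
Qed.

End Congruence.

Lemma hat_shaped_meq M M' : meq 6 6 M M' -> hat_shaped M' -> hat_shaped M.
Proof.
  intros E [HS [HD HO]]. split; [|split]; intros; rewrite ?E by lia.
  - apply HS; auto.
  - rewrite HD; auto.
  - rewrite HO; auto.
Qed.

Lemma hat_shaped_mopp M : hat_shaped M -> hat_shaped (mopp M).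
Proof.
  intros [HS [HD HO]]. unfold mopp. split; [|split]; intros.
  - rewrite HS; auto.
  - rewrite HD by auto. ring.
  - rewrite HO by auto. ring.
Qed.

Lemma hat_shaped_congr X p : is_spatial_transform X ->
  hat_shaped (mmul 6 (mmul 6 (mtr X) (hat p)) X).
Proof.
  intros [Rm [q [[HO _] HX]]].
  apply (hat_shaped_meq _ (mmul 6 (mmul 6 (mtr (spatial_xform Rm q)) (hat p)) (spatial_xform Rm q))).
  - apply mmul_meq; [apply mmul_meq; [apply mtr_meq|] |]; auto. intros ? ? _ _; reflexivity.
  - apply hat_shaped_congr_xform; auto.
Qed.

(** * Quadratic forms along a joint motion *)

Lemma derivable_pt_lim_sumR n (F : nat -> R -> R) dF x :
  (forall c, (c < n)%nat -> derivable_pt_lim (F c) x (dF c)) ->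
  derivable_pt_lim (fun s => sumR n (fun c => F c s)) x (sumR n dF).
Proof.
  induction n; intros H; simpl.
  - apply derivable_pt_lim_const.
  - apply (derivable_pt_lim_plus (fun s => sumR n (fun c => F c s)) (F n)); auto.
Qed.

Lemma derivable_pt_lim_mult_const (f : R -> R) c x l :
  derivable_pt_lim f x l -> derivable_pt_lim (fun s => f s * c) x (l * c).
Proof.
  intros H. replace (l * c) with (l * c + f x * 0) by ring.
  apply (derivable_pt_lim_mult f (fct_cte c)); [exact H | apply derivable_pt_lim_const].
Qed.

Lemma derivable_pt_lim_mvmul (X : R -> mat) (D : mat) w s0 a :
  (forall b, (b < 6)%nat -> derivable_pt_lim (fun s => X s a b) s0 (D a b)) ->
  derivable_pt_lim (fun s => mvmul 6 (X s) w a) s0 (mvmul 6 D w a).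
Proof.
  intros HD. apply (derivable_pt_lim_sumR 6 (fun c s => X s a c * w c)). intros c Hc.
  apply derivable_pt_lim_mult_const; auto.
Qed.

Lemma derivable_pt_lim_quad6 (X : R -> mat) (D : mat) w H s0 :
  (forall a b, (a < 6)%nat -> (b < 6)%nat -> derivable_pt_lim (fun s => X s a b) s0 (D a b)) ->
  derivable_pt_lim (fun s => quad6 (mvmul 6 (X s) w) H) s0
   (dot 6 (mvmul 6 D w) (mvmul 6 H (mvmul 6 (X s0) w))
    + dot 6 (mvmul 6 (X s0) w) (mvmul 6 H (mvmul 6 D w))).
Proof.
  intros HD.
  assert (Hg : forall a, (a < 6)%nat ->
    derivable_pt_lim (fun s => mvmul 6 (X s) w a) s0 (mvmul 6 D w a))
    by (intros; apply derivable_pt_lim_mvmul; auto).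
  assert (Hh : forall a, (a < 6)%nat -> derivable_pt_lim (fun s => mvmul 6 H (mvmul 6 (X s) w) a) s0
     (mvmul 6 H (mvmul 6 D w) a)).
  { intros a Ha. apply (derivable_pt_lim_sumR 6 (fun c s => H a c * mvmul 6 (X s) w c)). intros c Hc.
    apply (derivable_pt_lim_scal (fun s => mvmul 6 (X s) w c)); auto. }
  unfold dot at 1 2. rewrite <- sumR_add.
  apply (derivable_pt_lim_sumR 6 (fun a s => mvmul 6 (X s) w a * mvmul 6 H (mvmul 6 (X s) w) a)).
  intros c Hc. apply (derivable_pt_lim_mult (fun s => mvmul 6 (X s) w c)); auto.
Qed.

(* Along [X' = - P X], [X^T H X] changes at rate [- X^T (inf_congr P H) X]. *)
Definition inf_congr (P H : mat) : mat := madd (mmul 6 (mtr P) H) (mmul 6 H P).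

Lemma inf_congr_sym P H : (forall i j, H i j = H j i) ->
  forall i j, inf_congr P H i j = inf_congr P H j i.
Proof.
  intros HS i j. unfold inf_congr, madd, mmul, mtr. rewrite Rplus_comm.
  f_equal; apply sumR_ext; intros; rewrite HS; ring.
Qed.

Lemma derivable_pt_lim_quad6_flow (X : R -> mat) P w H s0 :
  (forall a b, (a < 6)%nat -> (b < 6)%nat ->
     derivable_pt_lim (fun s => X s a b) s0 (mopp (mmul 6 P (X s0)) a b)) ->
  derivable_pt_lim (fun s => quad6 (mvmul 6 (X s) w) H) s0 (- quad6 (mvmul 6 (X s0) w) (inf_congr P H)).
Proof.
  intros HD. set (g := mvmul 6 (X s0) w).
  replace (- quad6 g (inf_congr P H)) with
    (dot 6 (mvmul 6 (mopp (mmul 6 P (X s0))) w) (mvmul 6 H g)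
     + dot 6 g (mvmul 6 H (mvmul 6 (mopp (mmul 6 P (X s0))) w))).
  { apply derivable_pt_lim_quad6; exact HD. }
  rewrite (dot_ext 6 _ (fun k => - mvmul 6 P g k) (mvmul 6 H g) (mvmul 6 H g))
    by (auto; intros; rewrite mvmul_mopp, mvmul_mmul; reflexivity).
  rewrite (dot_ext 6 g g _ (fun k => - mvmul 6 H (mvmul 6 P g) k)); auto.
  2:{ intros k _. rewrite <- mvmul_opp_vec. apply mvmul_ext.
      intros; rewrite mvmul_mopp, mvmul_mmul; reflexivity. }
  rewrite dot_opp_l, dot_opp_r. unfold quad6.
  rewrite (dot_ext 6 g g (mvmul 6 (inf_congr P H) g)
     (fun k => mvmul 6 (mtr P) (mvmul 6 H g) k + 1 * mvmul 6 H (mvmul 6 P g) k)); auto.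
  2:{ intros k _. unfold inf_congr. rewrite mvmul_madd, !mvmul_mmul. ring. }
  rewrite dot_lincomb_r, dot_mvmul_mtr. ring.
Qed.

Lemma derivable_pt_lim_0_const f : (forall x, derivable_pt_lim f x 0) -> forall x y, f x = f y.
Proof.
  intros H. pose (pr := fun x => exist (fun l => derivable_pt_abs f x l) 0 (H x) : derivable_pt f x).
  apply (null_derivative_1 f pr). reflexivity.
Qed.

Section Joint.
Variables (XJ : R -> mat) (Phi : vec).
Hypothesis XJ_0 : meq 6 6 (XJ 0) ident.
Hypothesis XJ_deriv : forall q a b, (a < 6)%nat -> (b < 6)%nat ->
  derivable_pt_lim (fun s => XJ s a b) q (mopp (mmul 6 (scross Phi) (XJ q)) a b).

Lemma quad6_joint_invariant H : meq 6 6 (inf_congr (scross Phi) H) mzero ->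
  forall w q, quad6 (mvmul 6 (XJ q) w) H = quad6 w H.
Proof.
  intros HM w q. transitivity (quad6 (mvmul 6 (XJ 0) w) H).
  - apply (derivable_pt_lim_0_const (fun s => quad6 (mvmul 6 (XJ s) w) H)). intros s.
    rewrite <- Ropp_0, <- (quad6_mzero (mvmul 6 (XJ s) w) _ HM).
    apply derivable_pt_lim_quad6_flow; auto.
  - apply quad6_ext. intros; apply mvmul_ident; auto.
Qed.

Lemma inf_congr_eq0_of_joint_invariant H : (forall i j, H i j = H j i) ->
  (forall w q, quad6 (mvmul 6 (XJ q) w) H = quad6 w H) -> meq 6 6 (inf_congr (scross Phi) H) mzero.
Proof.
  intros HS Hinv. apply quad6_polarization; [intros; apply inf_congr_sym; auto|]. intros w.
  assert (D : derivable_pt_lim (fun s => quad6 (mvmul 6 (XJ s) w) H) 0 0).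
  { apply (derivable_pt_lim_ext (fct_cte (quad6 w H))); [intros; symmetry; apply Hinv|].
    apply derivable_pt_lim_const. }
  pose proof (uniqueness_limite _ _ _ _ D (derivable_pt_lim_quad6_flow XJ _ w H 0 (XJ_deriv 0))) as E.
  rewrite (quad6_ext _ w) in E by (intros; apply mvmul_ident; auto). lra.
Qed.

End Joint.

Lemma dot_left_null u H : (forall b, (b < 6)%nat -> sumR 6 (fun a => u a * H a b) = 0) ->
  forall y, dot 6 u (mvmul 6 H y) = 0.
Proof.
  intros Hu y. change (dot 6 u (mvmul 6 (mtr (mtr H)) y) = 0). rewrite dot_mvmul_mtr.
  apply sumR_eq0. intros b Hb. unfold mvmul, mtr.
  rewrite (sumR_ext 6 _ (fun a => u a * H a b)) by (intros; ring). rewrite Hu; auto; ring.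
Qed.

Lemma quad6_translate_left_null u H : (forall i j, H i j = H j i) ->
  (forall b, (b < 6)%nat -> sumR 6 (fun a => u a * H a b) = 0) ->
  forall w t, quad6 (fun k => w k + t * u k) H = quad6 w H.
Proof.
  intros HS Hu w t. rewrite quad6_expand, (dot_mvmul_sym 6 w u H) by auto.
  unfold quad6 at 2. rewrite !dot_left_null by auto. ring.
Qed.

Lemma left_null_of_quad6_translate u H : (forall i j, H i j = H j i) ->
  (forall w t, quad6 (fun k => w k + t * u k) H = quad6 w H) ->
  forall b, (b < 6)%nat -> sumR 6 (fun a => u a * H a b) = 0.
Proof.
  intros HS Hinv b Hb.
  assert (Hdot : dot 6 u (mvmul 6 H (basis_vec b)) = 0).
  { pose proof (Hinv (basis_vec b) 1) as Q1. pose proof (Hinv (basis_vec b) (-1)) as Q2.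
    rewrite quad6_expand, (dot_mvmul_sym 6 (basis_vec b) u H) in Q1, Q2 by auto. lra. }
  rewrite <- Hdot. apply sumR_ext. intros a Ha. unfold mvmul. rewrite sumR_basis_r; auto.
Qed.

(** * The floating-base chain *)

Definition adj3_mul (Rm : mat) (a : vec) : vec := fun k =>
  match k with
  | 0 => (Rm 1%nat 1%nat * Rm 2%nat 2%nat - Rm 1%nat 2%nat * Rm 2%nat 1%nat) * a 0%nat
       + (Rm 0%nat 2%nat * Rm 2%nat 1%nat - Rm 0%nat 1%nat * Rm 2%nat 2%nat) * a 1%nat
       + (Rm 0%nat 1%nat * Rm 1%nat 2%nat - Rm 0%nat 2%nat * Rm 1%nat 1%nat) * a 2%nat
  | 1 => (Rm 1%nat 2%nat * Rm 2%nat 0%nat - Rm 1%nat 0%nat * Rm 2%nat 2%nat) * a 0%nat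
       + (Rm 0%nat 0%nat * Rm 2%nat 2%nat - Rm 0%nat 2%nat * Rm 2%nat 0%nat) * a 1%nat
       + (Rm 0%nat 2%nat * Rm 1%nat 0%nat - Rm 0%nat 0%nat * Rm 1%nat 2%nat) * a 2%nat
  | 2 => (Rm 1%nat 0%nat * Rm 2%nat 1%nat - Rm 1%nat 1%nat * Rm 2%nat 0%nat) * a 0%nat
       + (Rm 0%nat 1%nat * Rm 2%nat 0%nat - Rm 0%nat 0%nat * Rm 2%nat 1%nat) * a 1%nat
       + (Rm 0%nat 0%nat * Rm 1%nat 1%nat - Rm 0%nat 1%nat * Rm 1%nat 0%nat) * a 2%nat
  | _ => 0 end.

(* The adjugate inverts [Rm] because [det3 Rm = 1]; the translational block is then solved by
   back substitution. *)
Lemma spatial_transform_surjective X : is_spatial_transform X ->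
  forall w, exists x, forall i, (i < 6)%nat -> mvmul 6 X x i = w i.
Proof.
  intros [Rm [p [[_ Hdet] HX]]] w.
  set (x1 := adj3_mul Rm w).
  set (x2 := fun k => adj3_mul Rm (fun j => w (j + 3)%nat) k + mvmul 3 (skew p) x1 k).
  exists (fun k => if Nat.ltb k 3 then x1 k else x2 (k - 3)%nat).
  intros i Hi. rewrite (mvmul_ext_mat 6 X (spatial_xform Rm p)) by (intros; apply HX; auto).
  transitivity (det3 Rm * w i); [|rewrite Hdet; ring].
  unfold x2, x1. case6 i; try lia;
    unfold spatial_xform, mvmul, block, skew, mzero, mopp, mmul, det3; cbn; ring.
Qed.

Definition at_joint (k : nat) (a : R) : nat -> R := fun j => if Nat.eqb j k then a else 0.

Lemma at_joint_here k a : at_joint k a k = a.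
Proof. unfold at_joint. rewrite Nat.eqb_refl. reflexivity. Qed.

Lemma at_joint_other k a j : j <> k -> at_joint k a j = 0.
Proof. intros H. unfold at_joint. destruct (Nat.eqb_spec j k); [contradiction | reflexivity]. Qed.

Definition transfer_part (XJc : nat -> mat) (i : nat) (dp : param) : param :=
  fun j => if Nat.eqb j i then dp i
           else if Nat.eqb j (i - 1) then vee (mopp (mmul 6 (mmul 6 (mtr (XJc i)) (hat (dp i))) (XJc i)))
           else fun _ => 0.

Lemma transfer_part_top XJc i dp : transfer_part XJc i dp i = dp i.
Proof. unfold transfer_part. rewrite Nat.eqb_refl. reflexivity. Qed.

Lemma transfer_part_prev XJc i dp : (1 <= i)%nat ->
  transfer_part XJc i dp (i - 1)%nat = vee (mopp (mmul 6 (mmul 6 (mtr (XJc i)) (hat (dp i))) (XJc i))).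
Proof.
  intros Hi. unfold transfer_part. destruct (Nat.eqb_spec (i - 1) i); [lia|].
  rewrite Nat.eqb_refl. reflexivity.
Qed.

Lemma transfer_part_other XJc i dp j : j <> i -> j <> (i - 1)%nat ->
  transfer_part XJc i dp j = fun _ => 0.
Proof.
  intros H1 H2. unfold transfer_part.
  destruct (Nat.eqb_spec j i), (Nat.eqb_spec j (i - 1)); try contradiction. reflexivity.
Qed.

Definition set_at (t : nat -> param) (i : nat) (s : param) : nat -> param :=
  fun i' => if Nat.eqb i' i then s else t i'.

Lemma sumR_set_at n (t : nat -> param) i s j c : (2 <= i < n + 2)%nat -> (forall j c, t i j c = 0) ->
  sumR n (fun m => set_at t i s (m + 2)%nat j c) = sumR n (fun m => t (m + 2)%nat j c) + s j c.
Proof.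
  intros Hi Hti. rewrite <- (sumR_delta n (i - 2) (s j c)), <- sumR_add by lia.
  apply sumR_ext. intros m Hm. unfold set_at.
  destruct (Nat.eqb_spec (m + 2) i), (Nat.eqb_spec m (i - 2)); try lia.
  - subst. rewrite Hti. ring.
  - ring.
Qed.

Lemma param_eq0_of_hat N (p : param) j : is_param N p -> meq 6 6 (hat (p j)) mzero ->
  forall c, p j c = 0.
Proof.
  intros Hp Hm c. destruct (Nat.lt_ge_cases c 10); [apply hat_eq0_inv; auto | apply Hp; lia].
Qed.

Section Chain.
Variables (N : nat) (Phi : nat -> vec) (XJc : nat -> mat) (XJ : nat -> R -> mat).
Hypothesis XJc_spatial : forall i, (2 <= i <= N)%nat -> is_spatial_transform (XJc i).
Hypothesis XJ_0 : forall i, (2 <= i <= N)%nat -> meq 6 6 (XJ i 0) ident.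
Hypothesis XJ_deriv : forall i q a b, (2 <= i <= N)%nat -> (a < 6)%nat -> (b < 6)%nat ->
  derivable_pt_lim (fun s => XJ i s a b) q (mopp (mmul 6 (scross (Phi i)) (XJ i q)) a b).

Local Notation velocity := (vel Phi XJc XJ).
Local Notation NS := (nullspace N Phi XJc XJ).
Local Notation T := (inertia_transfer N Phi XJc).

Lemma vel_SS v1 q qd m k : velocity v1 q qd (S (S m)) k =
  mvmul 6 (XJ (S (S m)) (q (S (S m)))) (mvmul 6 (XJc (S (S m))) (velocity v1 q qd (S m))) k
  + qd (S (S m)) * Phi (S (S m)) k.
Proof. cbn [vel]. unfold Xlink. rewrite mvmul_mmul. reflexivity. Qed.

Lemma vel_ext v1 q qd q' qd' n : (forall j, (j <= n)%nat -> q j = q' j /\ qd j = qd' j) ->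
  velocity v1 q qd n = velocity v1 q' qd' n.
Proof.
  induction n as [|[|n] IH]; intros H; try reflexivity.
  extensionality k. rewrite !vel_SS, IH by (intros; apply H; lia).
  destruct (H (S (S n))) as [-> ->]; auto.
Qed.

Lemma vel_reachable n : (1 <= n <= N)%nat ->
  forall w, exists v1, forall k, (k < 6)%nat -> velocity v1 (fun _ => 0) (fun _ => 0) n k = w k.
Proof.
  induction n as [|[|n] IH]; intros Hn w; [lia| exists w; reflexivity |].
  destruct (spatial_transform_surjective _ (XJc_spatial (S (S n)) ltac:(lia)) w) as [x Hx].
  destruct (IH ltac:(lia) x) as [v1 Hv]. exists v1. intros k Hk.
  rewrite vel_SS, mvmul_ident by (auto; apply XJ_0; lia).
  rewrite (mvmul_ext 6 _ _ x), Hx by auto. ring.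
Qed.

Lemma nullspace_ext dp dp' : (forall j c, dp j c = dp' j c) -> NS dp -> NS dp'.
Proof.
  intros E. replace dp' with dp; auto.
  extensionality j; extensionality c; auto.
Qed.

Lemma nullspace_lincomb a b dp dp' : NS dp -> NS dp' -> NS (fun j c => a * dp j c + b * dp' j c).
Proof.
  intros [Hp Hn] [Hp' Hn']. split.
  - intros j c Hj. rewrite Hp, Hp' by auto. ring.
  - intros v1 q qd.
    rewrite (sumR_ext N _ (fun j => a * quad6 (velocity v1 q qd (S j)) (hat (dp (S j)))
                                   + b * quad6 (velocity v1 q qd (S j)) (hat (dp' (S j))))).
    + rewrite sumR_add, !sumR_scal, Hn, Hn'. ring.
    + intros j _. rewrite <- quad6_lincomb_mat. apply quad6_ext_mat. intros i k _ _. apply hat_lincomb.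
Qed.

Lemma nullspace_zero : NS (fun _ _ => 0).
Proof.
  split; [intros j c _; reflexivity|]. intros. apply sumR_eq0. intros.
  apply quad6_mzero, hat_eq0_meq. auto.
Qed.

Lemma nullspace_sumR n (t : nat -> param) : (forall m, (m < n)%nat -> NS (t m)) ->
  NS (fun j c => sumR n (fun m => t m j c)).
Proof.
  induction n as [|n IH]; intros Ht; [apply nullspace_zero|].
  apply (nullspace_ext (fun j c => 1 * sumR n (fun m => t m j c) + 1 * t n j c)); [intros; simpl; ring|].
  apply nullspace_lincomb; auto.
Qed.

Lemma inertia_transfer_nullspace i dp : (2 <= i <= N)%nat -> T i dp -> NS dp.
Proof.
  intros Hi [Hp [Hcongr [Hnull [Hinf Hoff]]]]. split; auto. intros v1 q qd.
  destruct i as [|[|m]]; try lia. cbn [Nat.sub] in Hcongr.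
  rewrite (sumR_two N _ (S m) m) by (try lia; intros j Hj H1 H2; apply quad6_mzero, Hoff; lia).
  set (H := hat (dp (S (S m)))) in *. set (u := velocity v1 q qd (S m)).
  rewrite (quad6_ext _ (fun k => mvmul 6 (XJ (S (S m)) (q (S (S m)))) (mvmul 6 (XJc (S (S m))) u) k
       + qd (S (S m)) * Phi (S (S m)) k)) by (intros; apply vel_SS).
  rewrite quad6_translate_left_null by (auto; intros; apply hat_sym).
  rewrite (quad6_joint_invariant (XJ (S (S m))) (Phi (S (S m)))); auto.
  rewrite (quad6_ext_mat u _ _ Hcongr), quad6_mopp, quad6_congr. ring.
Qed.

Lemma nullspace_base_eq0 dp : (1 <= N)%nat -> NS dp -> (forall j, (1 < j)%nat -> forall c, dp j c = 0) ->
  forall c, dp 1%nat c = 0.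
Proof.
  intros HN [Hp Hn] Hz. apply (param_eq0_of_hat N); auto.
  apply quad6_polarization; [intros; apply hat_sym|]. intros v.
  specialize (Hn v (fun _ => 0) (fun _ => 0)).
  rewrite (sumR_ext N _ (fun j => if Nat.eqb j 0 then quad6 v (hat (dp 1%nat)) else 0)) in Hn.
  - rewrite sumR_delta in Hn by lia. auto.
  - intros j Hj. destruct (Nat.eqb_spec j 0) as [->|]; [reflexivity|].
    apply quad6_mzero, hat_eq0_meq. intros; apply Hz; lia.
Qed.

(* Moving only joint [k] leaves the velocities of the bodies before [k] unchanged, so by the
   nullspace property the energy term of body [k] alone cannot change. *)
Lemma nullspace_single_joint k dp : (2 <= k <= N)%nat -> NS dp ->
  (forall j, (k < j)%nat -> forall c, dp j c = 0) ->
  forall v1 a b, quad6 (velocity v1 (at_joint k a) (at_joint k b) k) (hat (dp k)) =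
                 quad6 (velocity v1 (at_joint k 0) (at_joint k 0) k) (hat (dp k)).
Proof.
  intros Hk [_ Hn] Hz v1 a b.
  assert (E := sumR_sub_single N
    (fun j => quad6 (velocity v1 (at_joint k a) (at_joint k b) (S j)) (hat (dp (S j))))
    (fun j => quad6 (velocity v1 (at_joint k 0) (at_joint k 0) (S j)) (hat (dp (S j)))) (k - 1)).
  cbv beta in E. rewrite !Hn in E. replace (S (k - 1)) with k in E by lia.
  apply Rminus_diag_uniq. rewrite <- E; [ring | lia |].
  intros j Hj Hjk. destruct (Nat.lt_ge_cases (S j) k).
  - f_equal. apply vel_ext. intros j' Hj'. rewrite !at_joint_other by lia. auto.
  - rewrite !quad6_mzero; auto; apply hat_eq0_meq; intros; apply Hz; lia.
Qed.

Lemma nullspace_top_invariant k dp : (2 <= k <= N)%nat -> NS dp ->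
  (forall j, (k < j)%nat -> forall c, dp j c = 0) ->
  forall w s t, quad6 (fun c => mvmul 6 (XJ k s) w c + t * Phi k c) (hat (dp k)) = quad6 w (hat (dp k)).
Proof.
  intros Hk Hdp Hz w s t.
  destruct (spatial_transform_surjective _ (XJc_spatial k Hk) w) as [u Hu].
  destruct (vel_reachable (k - 1) ltac:(lia) u) as [v1 Hv1].
  assert (Hvel : forall a b, quad6 (velocity v1 (at_joint k a) (at_joint k b) k) (hat (dp k)) =
                             quad6 (fun c => mvmul 6 (XJ k a) w c + b * Phi k c) (hat (dp k))).
  { intros a b. apply quad6_ext. intros c Hc. destruct k as [|[|m]]; try lia.
    rewrite vel_SS, !at_joint_here. f_equal. apply mvmul_ext. intros j Hj.
    rewrite <- Hu by auto. apply mvmul_ext. intros i Hi.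
    rewrite <- Hv1 by auto. replace (S (S m) - 1)%nat with (S m) by lia.
    rewrite (vel_ext v1 _ _ (fun _ => 0) (fun _ => 0) (S m)); [reflexivity|].
    intros j' Hj'. rewrite !at_joint_other by lia. auto. }
  rewrite <- Hvel, (nullspace_single_joint k dp), Hvel by auto.
  apply quad6_ext. intros c Hc. rewrite mvmul_ident by (auto; apply XJ_0; lia). ring.
Qed.

Lemma nullspace_top_conditions k dp : (2 <= k <= N)%nat -> NS dp ->
  (forall j, (k < j)%nat -> forall c, dp j c = 0) ->
  (forall b, (b < 6)%nat -> sumR 6 (fun a => Phi k a * hat (dp k) a b) = 0) /\
  meq 6 6 (inf_congr (scross (Phi k)) (hat (dp k))) mzero.
Proof.
  intros Hk Hdp Hz. pose proof (nullspace_top_invariant k dp Hk Hdp Hz) as Hinv. split.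
  - apply left_null_of_quad6_translate; [intros; apply hat_sym|]. intros w t.
    rewrite <- (Hinv w 0 t). apply quad6_ext. intros c Hc.
    rewrite mvmul_ident by (auto; apply XJ_0; lia). reflexivity.
  - apply (inf_congr_eq0_of_joint_invariant (XJ k) (Phi k));
      [apply XJ_0; auto | intros; apply XJ_deriv; auto | intros; apply hat_sym |].
    intros w s. rewrite <- (Hinv w s 0). apply quad6_ext. intros; ring.
Qed.

Lemma inertia_transfer_zero i : T i (fun _ _ => 0).
Proof.
  assert (H0 : forall a b, hat (fun _ => 0) a b = 0) by (intros; apply hat_eq0; auto).
  split; [intros j c _; reflexivity|]. split; [|split; [|split]].
  - intros a b _ _. rewrite H0. unfold mopp. rewrite congr_eq0; auto. ring.
  - intros b _. apply sumR_eq0. intros a _. rewrite H0. ring.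
  - intros a b _ _. unfold madd, mzero. rewrite mmul_eq0_r, mmul_eq0_l; auto. ring.
  - intros j _ _ a b _ _. apply H0.
Qed.

Lemma transfer_part_inertia_transfer i dp : (2 <= i <= N)%nat -> is_param N dp ->
  (forall b, (b < 6)%nat -> sumR 6 (fun a => Phi i a * hat (dp i) a b) = 0) ->
  meq 6 6 (inf_congr (scross (Phi i)) (hat (dp i))) mzero ->
  T i (transfer_part XJc i dp).
Proof.
  intros Hi Hp Hnull Hinf. split; [|split; [|split; [|split]]]; rewrite ?transfer_part_top; auto.
  - intros j c Hj. destruct (Nat.eq_dec j i) as [->|Hji]; [rewrite transfer_part_top; apply Hp; lia|].
    destruct (Nat.eq_dec j (i - 1)) as [->|Hjp].
    + rewrite transfer_part_prev by lia. apply vee_high. lia.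
    + rewrite transfer_part_other; auto.
  - rewrite transfer_part_prev by lia.
    apply hat_vee, hat_shaped_mopp, hat_shaped_congr, XJc_spatial; auto.
  - intros j Hji Hjp. rewrite transfer_part_other by auto. apply hat_eq0_meq. auto.
Qed.

(* Peel off the outermost body with nonzero parameters: its transfer part lies in [T], and
   subtracting it leaves a nullspace element supported on fewer bodies. *)
Lemma nullspace_decompose n : (S n <= N)%nat -> forall dp, NS dp ->
  (forall j, (S n < j)%nat -> forall c, dp j c = 0) ->
  exists t : nat -> param, (forall i, (2 <= i <= N)%nat -> T i (t i)) /\
    (forall i, (S n < i)%nat -> forall j c, t i j c = 0) /\
    (forall j c, dp j c = sumR (N - 1) (fun m => t (m + 2)%nat j c)).
Proof.
  induction n as [|n IH]; intros Hn dp Hdp Hz.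
  - exists (fun _ _ _ => 0). split; [intros; apply inertia_transfer_zero|]. split; [auto|].
    intros j c. rewrite sumR_eq0 by auto. destruct j as [|[|j]].
    + apply (proj1 Hdp). lia.
    + apply nullspace_base_eq0; auto.
    + apply Hz. lia.
  - destruct (nullspace_top_conditions (S (S n)) dp ltac:(lia) Hdp Hz) as [Hnull Hinf].
    set (s := transfer_part XJc (S (S n)) dp).
    assert (Hs : T (S (S n)) s) by (apply transfer_part_inertia_transfer; auto; [lia | apply Hdp]).
    assert (Hd : NS (fun j c => 1 * dp j c + (-1) * s j c))
      by (apply nullspace_lincomb; auto; apply (inertia_transfer_nullspace (S (S n))); auto; lia).
    destruct (IH ltac:(lia) _ Hd) as [t [Ht [Htz Hsum]]].
    { intros j Hj c. unfold s. destruct (Nat.eq_dec j (S (S n))) as [->|Hjn].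
      - rewrite transfer_part_top. ring.
      - rewrite transfer_part_other, Hz by lia. ring. }
    exists (set_at t (S (S n)) s). split; [|split].
    + intros i Hi. unfold set_at. destruct (Nat.eqb_spec i (S (S n))) as [->|]; auto.
    + intros i Hi j c. unfold set_at. destruct (Nat.eqb_spec i (S (S n))); [lia|]. apply Htz. lia.
    + intros j c. rewrite sumR_set_at, <- Hsum by (try lia; intros; apply Htz; lia). ring.
Qed.

Lemma inertia_transfer_other i s j : T i s -> j <> i -> j <> (i - 1)%nat -> forall c, s j c = 0.
Proof. intros [Hp [_ [_ [_ Hoff]]]] Hji Hjp. apply (param_eq0_of_hat N); auto. Qed.

Lemma inertia_transfer_eq0_of_top i s : T i s -> (forall c, s i c = 0) -> forall j c, s j c = 0.
Proof.
  intros Hs Htop j. destruct (Nat.eq_dec j i) as [->|Hji]; auto.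
  destruct (Nat.eq_dec j (i - 1)) as [->|Hjp]; [|apply (inertia_transfer_other i); auto].
  destruct Hs as [Hp [Hcongr _]]. apply (param_eq0_of_hat N); auto.
  intros a b Ha Hb. rewrite Hcongr by auto. unfold mopp, mzero.
  rewrite congr_eq0; [ring|]. intros; apply hat_eq0; auto.
Qed.

(* If the components beyond [i] vanish, body [i] of the sum only sees the component in [T i]. *)
Lemma inertia_transfer_sum_top (t : nat -> param) i :
  (forall i', (2 <= i' <= N)%nat -> T i' (t i')) ->
  (forall j c, sumR (N - 1) (fun m => t (m + 2)%nat j c) = 0) ->
  (2 <= i <= N)%nat -> (forall i', (i < i' <= N)%nat -> forall j c, t i' j c = 0) ->
  forall j c, t i j c = 0.
Proof.
  intros Ht Hsum Hi Hbeyond. apply (inertia_transfer_eq0_of_top i); auto. intros c.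
  rewrite <- (Hsum i c), <- (sumR_delta (N - 1) (i - 2) (t i i c)) by lia.
  apply sumR_ext. intros m Hm. destruct (Nat.eqb_spec m (i - 2)).
  - f_equal. lia.
  - destruct (Nat.lt_ge_cases i (m + 2)).
    + symmetry. apply Hbeyond. lia.
    + symmetry. apply (inertia_transfer_other (m + 2)); [apply Ht | ..]; lia.
Qed.

Lemma inertia_transfer_sum_eq0 (t : nat -> param) :
  (forall i, (2 <= i <= N)%nat -> T i (t i)) ->
  (forall j c, sumR (N - 1) (fun m => t (m + 2)%nat j c) = 0) ->
  forall i, (2 <= i <= N)%nat -> forall j c, t i j c = 0.
Proof.
  intros Ht Hsum.
  assert (Hd : forall d i, (2 <= i <= N)%nat -> (N - i <= d)%nat -> forall j c, t i j c = 0).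
  { induction d as [|d IH]; intros i Hi Hd; apply inertia_transfer_sum_top; auto;
      intros i' Hi'; [lia | apply IH; lia]. }
  intros i Hi. apply (Hd (N - i)%nat); auto.
Qed.

Lemma nullspace_iff_inertia_transfer_sum dp : is_param N dp ->
  (NS dp <-> exists t : nat -> param, (forall i, (2 <= i <= N)%nat -> T i (t i)) /\
     (forall j c, dp j c = sumR (N - 1) (fun m => t (m + 2)%nat j c))).
Proof.
  intros Hp. split.
  - intros Hdp. destruct (Nat.eq_dec N 0) as [HN|HN].
    + exists (fun _ _ _ => 0). split; [intros; lia|]. intros j c.
      rewrite sumR_eq0 by auto. apply Hp. lia.
    + destruct (nullspace_decompose (N - 1) ltac:(lia) dp Hdp) as [t [Ht [_ Hsum]]].
      * intros j Hj c. apply Hp. lia.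
      * exists t. auto.
  - intros [t [Ht Hsum]].
    apply (nullspace_ext (fun j c => sumR (N - 1) (fun m => t (m + 2)%nat j c))); [auto|].
    apply nullspace_sumR. intros m Hm. apply (inertia_transfer_nullspace (m + 2)); [lia | apply Ht; lia].
Qed.

End Chain.

Theorem theorem1 (N : nat) (Phi : nat -> vec) (XJc : nat -> mat) (XJ : nat -> R -> mat)
  (HXc : forall i, (2 <= i <= N)%nat -> is_spatial_transform (XJc i))
  (HXJ : forall i q, (2 <= i <= N)%nat -> is_spatial_transform (XJ i q))
  (HXJ0 : forall i, (2 <= i <= N)%nat -> meq 6 6 (XJ i 0) ident)
  (HdXJ : forall i q a b, (2 <= i <= N)%nat -> (a < 6)%nat -> (b < 6)%nat ->
     derivable_pt_lim (fun s => XJ i s a b) q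
       (mopp (mmul 6 (scross (Phi i)) (XJ i q)) a b)) :
  is_direct_sum N (nullspace N Phi XJc XJ) (fun i => inertia_transfer N Phi XJc i).
Proof.
  split.
  - intros dp Hp. exact (nullspace_iff_inertia_transfer_sum N Phi XJc XJ HXc HXJ0 HdXJ dp Hp).
  - apply inertia_transfer_sum_eq0.
Qed.
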